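(* Let $q_{ij}\in\mathbb{C}$ ($1\le i,j\le 4$) be $4$-th roots of unity with $q_{ii}=q_{ij}q_{ji}=1$ such that $\prod_{i=1}^4 q_{ij}$ is independent of $j$, and let $$A_4=\mathbb{C}\langle x_1,\dots,x_4\rangle\big/\Big(\textstyle\sum_{k=1}^4x_k^4,\ x_ix_j-q_{ij}x_jx_i\Big)_{i,j}$$ (so that $\mathrm{proj}(A_4)$ is a non-commutative Fermat quartic K3 surface). Then $\mathrm{Hilb}^1(A_4)$ is either a quartic K3 surface or $24$ distinct points. In particular its Euler number is $24$, independently of the values of the $q_{ij}$.
   Context: A $1$-point module over a graded algebra $A$ generated in degree $1$ is a cyclic graded right $A$-module generated in degree $0$ with Hilbert series $1/(1-t)$; $\mathrm{Hilb}^1(A)$ is the set (scheme) of isomorphism classes of such modules, identified as a subset of sequences of points of $\mathbb{P}^{3}$ via $m_ix_j=\xi_{i,j}m_{i+1}$, $[\xi_{i,1}:\dots:\xi_{i,4}]\in\mathbb{P}^3$. *)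

From HB Require Import structures.
From mathcomp Require Import all_boot all_order all_algebra.
From mathcomp Require Import mpoly.
Set Implicit Arguments. Unset Strict Implicit. Unset Printing Implicit Defensive.
Import Order.TTheory GRing.Theory Num.Theory.
Local Open Scope ring_scope.

(* A (representative of a) point of P^3 over C: a vector of homogeneous
   coordinates x : 'I_4 -> C.  Two vectors represent the same point iff
   they are proportional by a nonzero scalar. *)
Definition nonzero4 (C : numClosedFieldType) (x : 'I_4 -> C) : Prop :=
  exists j, x j != 0.

Definition proj_eq (C : numClosedFieldType) (x y : 'I_4 -> C) : Prop :=
  exists c : C, c != 0 /\ forall j, y j = c * x j.

(* A 1-point module over A_4 with basis m_0, m_1, ... and
   m_n x_j = xi n j m_{n+1}.  It is an A_4-module iff the generators of the
   defining ideal annihilate every m_n: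
     m_n (x_a x_b - q_ab x_b x_a) = (xi_{n,a} xi_{n+1,b} - q_ab xi_{n,b} xi_{n+1,a}) m_{n+2} = 0,
     m_n (sum_k x_k^4) = (sum_k xi_{n,k} xi_{n+1,k} xi_{n+2,k} xi_{n+3,k}) m_{n+4} = 0;
   it is cyclic generated by m_0 iff every xi n is nonzero (a point of P^3). *)
Definition point_module_seq (C : numClosedFieldType) (q : 'I_4 -> 'I_4 -> C)
    (xi : nat -> 'I_4 -> C) : Prop :=
  [/\ forall n, nonzero4 (xi n),
      forall n a b, xi n a * xi n.+1 b = q a b * (xi n b * xi n.+1 a)
    & forall n, \sum_(k < 4) xi n k * xi n.+1 k * xi n.+2 k * xi n.+3 k = 0].

Definition pm_iso (C : numClosedFieldType) (xi eta : nat -> 'I_4 -> C) : Prop :=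
  forall n, proj_eq (xi n) (eta n).

(* Hilb^1(A_4) is (via the truncation xi |-> xi_0) a smooth quartic surface
   in P^3 (= a quartic K3 surface): xi_0 determines the point module up to
   isomorphism, and the set of first points xi_0 is the zero locus in P^3 of
   a nonzero quartic form F whose gradient does not vanish on it. *)
Definition hilb1_is_quartic_K3 (C : numClosedFieldType) (q : 'I_4 -> 'I_4 -> C) : Prop :=
  exists F : {mpoly C[4]},
    [/\ F != 0, F \is 4.-homog,
        (forall v : 'I_4 -> C, nonzero4 v -> F.@[v] = 0 ->
            exists i, (mderiv i F).@[v] != 0),
        (forall xi eta, point_module_seq q xi -> point_module_seq q eta ->
            proj_eq (xi 0%N) (eta 0%N) -> pm_iso xi eta)
      & (forall v : 'I_4 -> C, nonzero4 v ->
            (F.@[v] = 0 <-> exists xi, point_module_seq q xi /\ xi 0%N = v))].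

Definition hilb1_is_24_points (C : numClosedFieldType) (q : 'I_4 -> 'I_4 -> C) : Prop :=
  exists P : 'I_24 -> nat -> 'I_4 -> C,
    [/\ forall k, point_module_seq q (P k),
        forall k l, pm_iso (P k) (P l) -> k = l
      & forall xi, point_module_seq q xi -> exists k, pm_iso xi (P k)].

From HB Require Import structures.
From mathcomp Require Import all_boot all_order all_algebra.
From mathcomp Require Import mpoly ring zify.
From Stdlib Require Import FunctionalExtensionality.
Import Order.TTheory GRing.Theory Num.Theory.
Local Open Scope ring_scope.

(* Let [v = xi_0] be the first point of a point module and [a] a coordinate
   with [v_a <> 0]. The relations force [xi_n = (q_ak^n v_k)_k] up to scalars,
   so [v] determines the module, and the quartic relation becomes
   [sum_k q_ak^2 v_k^4 = 0]; comparing two support coordinates shows that [q]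
   satisfies [q_ab q_bc = q_ac] on the support of [v]. If [q] satisfies this
   everywhere, Hilb^1 is the smooth quartic [sum_k q_0k^2 v_k^4 = 0].
   Otherwise the support has at most two points, because the column-product
   condition lets the relation on a support of size 3 propagate to the
   fourth index; the quartic rules out a single point, and for a support
   [{a, b}] the ratio [v_a / v_b] is one of the four fourth roots of
   [-q_ab^2]: 6 * 4 = 24 points. *)

Lemma exprS_eq1_neq0 {R : nzRingType} {x : R} {n} : x ^+ n.+1 = 1 -> x != 0.
Proof. by apply: contra_eqN => /eqP->; rewrite expr0n eq_sym oner_eq0. Qed.

Lemma prim4_rootCi (C : numClosedFieldType) : 4.-primitive_root ('i : C).
Proof.
have i4 : ('i : C) ^+ 4 = 1 by rewrite (exprM _ 2 2) sqrCi sqrrN expr1n.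
have [m prim_m m_dvd4] := prim_order_exists (isT : (0 < 4)%N) i4.
have m_ndvd2 : ~~ (m %| 2)%N by rewrite (prim_order_dvd prim_m) sqrCi eqNr oner_eq0.
have m_le4 := dvdn_leq (isT : (0 < 4)%N) m_dvd4.
by move: m prim_m m_dvd4 m_ndvd2 m_le4 => [|[|[|[|[|]]]]].
Qed.

Lemma eq_expr4 (C : numClosedFieldType) (t r : C) : r != 0 -> t ^+ 4 = r ^+ 4 ->
  exists m : 'I_4, t = r * 'i ^+ m.
Proof.
move=> r_neq0 tr; have /(prim_rootP (prim4_rootCi C)) [m tm] : (t / r) ^+ 4 = 1.
  by rewrite exprMn tr exprVn mulfV // expf_neq0.
by exists m; rewrite -tm mulrC divfK.
Qed.

Lemma expCi_inj (C : numClosedFieldType) (m m' : 'I_4) : ('i : C) ^+ m = 'i ^+ m' -> m = m'.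
Proof.
move/eqP; rewrite (eq_prim_root_expr (prim4_rootCi C)) !modn_small //.
by move/eqP/val_inj.
Qed.

Definition supp {R : zmodType} {n} (v : 'I_n -> R) : {set 'I_n} := [set j | v j != 0].

Lemma in_supp {R : zmodType} {n} (v : 'I_n -> R) j : (j \in supp v) = (v j != 0).
Proof. by rewrite inE. Qed.

Lemma supp_proj_eq {C : numClosedFieldType} (x y : 'I_4 -> C) :
  proj_eq x y -> supp x = supp y.
Proof.
by case=> c [c_neq0 yx]; apply/setP => j; rewrite !in_supp yx mulf_eq0 negb_or c_neq0.
Qed.

Lemma enum_set2 {T : finType} (x0 : T) {B : {set T}} : #|B| = 2 ->
  let a := nth x0 (enum B) 0 in let b := nth x0 (enum B) 1 in
  a != b /\ B = [set a; b].
Proof.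
move=> B2; have := enum_uniq B; have := mem_enum B.
have : size (enum B) = 2 by rewrite -cardE.
case: (enum B) => [|a [|b []]] //= _ memB; rewrite andbT inE => ab.
by split=> //; apply/setP => j; rewrite -memB !inE.
Qed.

Lemma big_ord_supp2 {R : nmodType} {n} (f : 'I_n -> R) {a b} : a != b ->
  (forall k, k != a -> k != b -> f k = 0) -> \sum_(k < n) f k = f a + f b.
Proof.
move=> ab f0; rewrite (bigD1 a) // (bigD1 b) 1?eq_sym //= big1 ?addr0 // => k /andP[].
exact: f0.
Qed.

Definition pair4 := {B : {set 'I_4} | #|B| == 2%N}.

Definition pair_fst (B : pair4) : 'I_4 := nth ord0 (enum (val B)) 0.
Definition pair_snd (B : pair4) : 'I_4 := nth ord0 (enum (val B)) 1.

Lemma pair4P (B : pair4) : pair_fst B != pair_snd B /\ val B = [set pair_fst B; pair_snd B].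
Proof. exact: (enum_set2 ord0 (eqP (valP B))). Qed.

Lemma card_pair4_ord : #|{: pair4 * 'I_4}| = 24%N.
Proof. by rewrite card_prod card_ord card_sig -cardsE card_draws card_ord. Qed.

Lemma mderiv_exprS (R : comRingType) n (i : 'I_n) (p : {mpoly R[n]}) k :
  mderiv i (p ^+ k.+1) = p ^+ k *+ k.+1 * mderiv i p.
Proof.
elim: k => [|k IHk]; first by rewrite expr1 expr0 mul1r.
by rewrite exprS mderivM IHk exprS mulrS; ring.
Qed.

Lemma mderivXU (R : nzRingType) n (i k : 'I_n) :
  mderiv i ('X_k : {mpoly R[n]}) = (k == i)%:R.
Proof.
rewrite mderivX mnm1E; case: eqVneq => [->|_]; last by rewrite scale0r.
have -> : (U_(i) - U_(i))%MM = 0%MM by apply/mnmP => j; rewrite mnmBE subnn mnm0E.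
by rewrite mpolyX0 scale1r.
Qed.

Definition fermat_form {R : nzRingType} {n} (c : 'I_n -> R) : {mpoly R[n]} :=
  \sum_(k < n) c k *: 'X_k ^+ 4.

Section FermatForm.

Variables (R : numDomainType) (n : nat) (c : 'I_n -> R).

Lemma meval_fermat v : (fermat_form c).@[v] = \sum_(k < n) c k * v k ^+ 4.
Proof.
by rewrite raddf_sum; apply: eq_bigr => k _ /=; rewrite mevalZ rmorphXn /= mevalXU.
Qed.

Lemma fermat_form_homog : fermat_form c \is 4.-homog.
Proof.
apply: rpred_sum => k _; apply/dhomogZ/(dhomogMn 4 (_ : 'X_k \is 1.-homog)).
by rewrite dhomogX; apply/eqP; apply: mdeg1.
Qed.

Lemma meval_mderiv_fermat v i :
  (mderiv i (fermat_form c)).@[v] = 4%:R * c i * v i ^+ 3.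
Proof.
rewrite /fermat_form (big_morph _ (@mderivD _ _ i) (@mderiv0 _ _ i)) raddf_sum.
rewrite (bigD1 i) //= big1 => [|j ji]; last first.
  by rewrite /= mderivZ mderiv_exprS mderivXU (negbTE ji) mulr0 scaler0 meval0.
rewrite addr0 mderivZ mderiv_exprS mderivXU eqxx mulr1 mevalZ mevalMn rmorphXn /=.
by rewrite mevalXU -mulr_natl; ring.
Qed.

Lemma fermat_form_neq0 k : c k != 0 -> fermat_form c != 0.
Proof.
apply: contraNneq => F0; have := meval_fermat (fun j => (j == k)%:R).
rewrite F0 meval0 (bigD1 k) //= big1 => [|j /negbTE->]; last by rewrite expr0n mulr0.
by rewrite eqxx expr1n mulr1 addr0 => <-.
Qed.

End FermatForm.

Section Hilb1.

Context {C : numClosedFieldType} (q : 'I_4 -> 'I_4 -> C).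
Implicit Types (xi eta : nat -> 'I_4 -> C) (e v : 'I_4 -> C) (a b : 'I_4).

Definition diag_orbit e v : nat -> 'I_4 -> C := fun n k => e k ^+ n * v k.

Lemma diag_orbit0 e v : diag_orbit e v 0 = v.
Proof. by apply: functional_extensionality => k; rewrite /diag_orbit expr0 mul1r. Qed.

Lemma diag_orbit_pm e v : (forall k, e k ^+ 4 = 1) -> nonzero4 v ->
  {in supp v &, forall b c, e c = q b c * e b} ->
  \sum_(k < 4) e k ^+ 2 * v k ^+ 4 = 0 -> point_module_seq q (diag_orbit e v).
Proof.
move=> e4 [j vj] eq_e sum0; split.
- by move=> n; exists j; rewrite mulf_neq0 // expf_neq0 // (exprS_eq1_neq0 (e4 j)).
- move=> n a b; rewrite /diag_orbit.
  have [->|va] := eqVneq (v a) 0; first by rewrite !(mulr0, mul0r).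
  have [->|vb] := eqVneq (v b) 0; first by rewrite !(mulr0, mul0r).
  rewrite !exprS (eq_e a b) ?in_supp //; ring.
- move=> n; rewrite -[RHS]sum0; apply: eq_bigr => k _; rewrite /diag_orbit.
  have e_pow : e k ^+ n * e k ^+ n.+1 * e k ^+ n.+2 * e k ^+ n.+3 = e k ^+ 2.
    rewrite -!exprD -[in RHS](mulr1 (_ ^+ 2)) -(expr1n _ n.+1) -(e4 k) -exprM -exprD.
    by congr (_ ^+ _); lia.
  by rewrite -e_pow; ring.
Qed.

Lemma pm_succ_neq0 {xi n a} : point_module_seq q xi -> xi n a != 0 -> xi n.+1 a != 0.
Proof.
case=> nz rel _ xa; apply/eqP => xa1; have [b xb1] := nz n.+1.
by move/eqP: (rel n a b); rewrite xa1 !mulr0 mulf_eq0 (negbTE xa) (negbTE xb1).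
Qed.

(* Given [xi_n] up to scalar and one nonzero coordinate [a] of it, the relation
   [xi_{n,a} xi_{n+1,b} = q_ab xi_{n,b} xi_{n+1,a}] determines [xi_{n+1}] up to scalar. *)
Lemma pm_iso_first {xi eta} : point_module_seq q xi -> point_module_seq q eta ->
  proj_eq (xi 0%N) (eta 0%N) -> pm_iso xi eta.
Proof.
move=> pm_xi pm_eta xi_eta0; elim=> // n [c [c_neq0 eta_xi]].
have [a xa] : exists a, xi n a != 0 by case: pm_xi => nz _ _; apply: nz.
have ea : eta n a != 0 by rewrite eta_xi mulf_neq0.
have xa1 := pm_succ_neq0 pm_xi xa; have ea1 := pm_succ_neq0 pm_eta ea.
exists (eta n.+1 a / xi n.+1 a); split; first by rewrite mulf_neq0 ?invr_eq0.
move=> b; case: pm_xi pm_eta => _ rel_xi _ [_ rel_eta _].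
have := rel_eta n a b; rewrite !eta_xi => r_eta.
apply: (mulfI (_ : c * xi n a * xi n.+1 a != 0)); first by rewrite !mulf_neq0.
transitivity (xi n.+1 a * (c * xi n a * eta n.+1 b)); first ring.
rewrite r_eta; transitivity (c * eta n.+1 a * (xi n a * xi n.+1 b)).
  by rewrite rel_xi; ring.
by field.
Qed.

Hypothesis hqii : forall i, q i i = 1.

Lemma pm_iso_diag_orbit {xi a} : point_module_seq q xi -> xi 0%N a != 0 ->
  pm_iso (diag_orbit (q a) (xi 0%N)) xi.
Proof.
move=> pm_xi x0a; elim=> [|n [c [c_neq0 xi_n]]].
  by exists 1; split=> [|b]; rewrite ?oner_neq0 // /diag_orbit expr0 !mul1r.
have xna : xi n a != 0 by rewrite xi_n /diag_orbit hqii expr1n mul1r mulf_neq0.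
exists (xi n.+1 a / xi 0%N a); split; first by rewrite mulf_neq0 ?invr_eq0 ?pm_succ_neq0.
move=> b; case: pm_xi => _ rel _; have := rel n a b.
rewrite !xi_n /diag_orbit hqii expr1n mul1r => r.
apply: (mulfI (_ : c * xi 0%N a != 0)); first by rewrite mulf_neq0.
transitivity (c * xi 0%N a * xi n.+1 b); first by [].
by rewrite r exprS; field.
Qed.

Lemma pm_first_cocycle {xi a b c} : point_module_seq q xi ->
  xi 0%N a != 0 -> xi 0%N b != 0 -> xi 0%N c != 0 -> q a b * q b c = q a c.
Proof.
move=> pm_xi xa xb xc; have [mu [mu_neq0 xi1]] := pm_iso_diag_orbit pm_xi xa 1.
case: pm_xi => _ /(_ 0%N b c) r _; rewrite !xi1 /diag_orbit !expr1 in r.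
apply: (mulfI (_ : mu * xi 0%N b * xi 0%N c != 0)); first by rewrite !mulf_neq0.
transitivity (q b c * (xi 0%N c * (mu * (q a b * xi 0%N b)))); first ring.
by rewrite -r; ring.
Qed.

Hypothesis hq4 : forall i j, q i j ^+ 4 = 1.

Lemma pm_first_quartic {xi a} : point_module_seq q xi -> xi 0%N a != 0 ->
  \sum_(k < 4) q a k ^+ 2 * xi 0%N k ^+ 4 = 0.
Proof.
move=> pm_xi xa; have iso := pm_iso_diag_orbit pm_xi xa.
have [m1 [m1_neq0 xi1]] := iso 1%N; have [m2 [m2_neq0 xi2]] := iso 2%N.
have [m3 [m3_neq0 xi3]] := iso 3%N.
case: pm_xi => _ _ /(_ 0%N) sum0.
apply: (mulfI (_ : m1 * m2 * m3 != 0)); first by rewrite !mulf_neq0.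
rewrite mulr0 -[RHS]sum0 mulr_sumr; apply: eq_bigr => k _.
have q6 : q a k ^+ 6 = q a k ^+ 2 by rewrite (exprD _ 4 2) hq4 mul1r.
by rewrite -q6 xi1 xi2 xi3 /diag_orbit; ring.
Qed.

Lemma pm_supp_ge2 {xi} : point_module_seq q xi -> (2 <= #|supp (xi 0%N)|)%N.
Proof.
move=> pm_xi; have [a xa] : exists a, xi 0%N a != 0 by case: pm_xi => nz _ _; apply: nz.
rewrite ltnNge; apply/negP => supp_le1; move/eqP: (pm_first_quartic pm_xi xa).
rewrite (bigD1 a) //= big1 => [|j ja]; last first.
  suff -> : xi 0%N j = 0 by rewrite expr0n mulr0.
  by apply/eqP; apply: contraNT ja => xj; rewrite (card_le1_eqP supp_le1 j a) ?in_supp.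
by rewrite addr0 hqii expr1n mul1r expf_eq0 (negbTE xa) andbF.
Qed.

(* [q] is a multiplicative coboundary: [q x y = f y / f x] with [f := q x0]. *)
Definition coboundary : bool :=
  [forall x, [forall y, [forall z, q x y * q y z == q x z]]].

Lemma coboundaryP : reflect (forall x y z, q x y * q y z = q x z) coboundary.
Proof. exact: 'forall_'forall_'forall_eqP. Qed.

Hypothesis hqij : forall i j, q i j * q j i = 1.
Hypothesis hprod : forall j j', \prod_(i < 4) q i j = \prod_(i < 4) q i j'.

Lemma q_neq0 i j : q i j != 0.
Proof. exact: exprS_eq1_neq0 (hq4 i j). Qed.

Lemma prod_cocycle_defect s t : \prod_(i < 4) (q s i * q i t * q t s) = 1.
Proof.
rewrite !big_split /= prodr_const card_ord hq4 mulr1 (hprod t s).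
have -> : \prod_(i < 4) q s i = (\prod_(i < 4) q i s)^-1.
  by rewrite -prodfV; apply: eq_bigr => i _; rewrite -[RHS]mulr1 -(hqij i s) mulKf ?q_neq0.
by rewrite mulVf //; apply/prodf_neq0 => i _; apply: q_neq0.
Qed.

(* The defects [q s i * q i t * q t s] multiply to [1] over [i], so a single
   index outside [S] cannot spoil the coboundary relation. *)
Lemma coboundary_ext {S : {set 'I_4}} : (#|~: S| <= 1)%N ->
  {in S & &, forall x y z, q x y * q y z = q x z} ->
  {in S &, forall s t i, q s i * q i t = q s t}.
Proof.
move=> outS cobS s t sS tS i; have [iS|iNS] := boolP (i \in S); first exact: cobS.
have inS j : j != i -> j \in S.
  by apply: contraR => jNS; rewrite (card_le1_eqP outS j i) ?inE.
have := prod_cocycle_defect s t; rewrite (bigD1 i) //= big1 ?mulr1 => [defect|j ji].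
  by apply: (mulIf (q_neq0 t s)); rewrite defect hqij.
by rewrite (cobS s j t) ?(inS j ji) // hqij.
Qed.

Lemma coboundary_of_supp {S : {set 'I_4}} : (3 <= #|S|)%N ->
  {in S & &, forall x y z, q x y * q y z = q x z} -> coboundary.
Proof.
move=> S3 cobS; have outS : (#|~: S| <= 1)%N by have := cardsC S; rewrite card_ord; lia.
have ext := coboundary_ext outS cobS.
have [a aS] : exists a, a \in S by apply/set0Pn; rewrite -card_gt0 (ltnW (ltnW S3)).
have pivot x y : q a x * q x y = q a y.
  have [yS|yNS] := boolP (y \in S); first exact: ext.
  have [xS|xNS] := boolP (x \in S).
    by apply: (mulIf (q_neq0 y a)); rewrite -mulrA ext // !hqij.
  by rewrite (card_le1_eqP outS x y) ?inE // hqii mulr1.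
by apply/coboundaryP => x y z; apply: (mulfI (q_neq0 a x)); rewrite mulrA !pivot.
Qed.

Lemma pm_supp_le2 {xi} : ~~ coboundary -> point_module_seq q xi ->
  (#|supp (xi 0%N)| <= 2)%N.
Proof.
move=> not_cob pm_xi; rewrite leqNgt; apply: contra not_cob => supp3.
by apply: (coboundary_of_supp supp3) => x y z; rewrite !in_supp; apply: pm_first_cocycle.
Qed.

Section QuarticCase.

Hypothesis q_cob : forall x y z, q x y * q y z = q x z.

Let F : {mpoly C[4]} := fermat_form (fun k => q ord0 k ^+ 2).

Lemma meval_fermat_pivot v a :
  F.@[v] = q ord0 a ^+ 2 * \sum_(k < 4) q a k ^+ 2 * v k ^+ 4.
Proof.
rewrite meval_fermat mulr_sumr; apply: eq_bigr => k _.
by rewrite -(q_cob ord0 a k); ring.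
Qed.

Lemma hilb1_quartic_of_coboundary : hilb1_is_quartic_K3 q.
Proof.
exists F; split.
- by apply: (@fermat_form_neq0 _ _ _ ord0); rewrite hqii expr1n oner_neq0.
- exact: fermat_form_homog.
- move=> v [j vj] _; exists j.
  by rewrite meval_mderiv_fermat !mulf_neq0 ?expf_neq0 ?pnatr_eq0 ?q_neq0.
- by move=> xi eta; apply: pm_iso_first.
move=> v nz_v; split=> [Fv | [xi [pm_xi xi0]]].
  exists (diag_orbit (q ord0) v); split; last exact: diag_orbit0.
  apply: diag_orbit_pm => // [b c _ _|]; first by rewrite mulrC q_cob.
  by rewrite -meval_fermat.
have [a xa] := nz_v; rewrite -xi0 in xa *.
by rewrite (meval_fermat_pivot _ a) (pm_first_quartic pm_xi xa) mulr0.
Qed.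

End QuarticCase.

Lemma hilb1_24_points_of_family {T : finType} (P : T -> nat -> 'I_4 -> C) :
  #|T| = 24%N -> (forall t, point_module_seq q (P t)) ->
  (forall s t, pm_iso (P s) (P t) -> s = t) ->
  (forall xi, point_module_seq q xi -> exists t, pm_iso xi (P t)) ->
  hilb1_is_24_points q.
Proof.
move=> T24 pmP injP covP; exists (fun k => P (enum_val (cast_ord (esym T24) k))); split.
- by move=> k; apply: pmP.
- by move=> k l /injP /enum_val_inj /cast_ord_inj.
- move=> xi /covP [t iso]; exists (cast_ord T24 (enum_rank t)).
  by rewrite cast_ordK enum_rankK.
Qed.

Section TwoPointCase.

(* A fourth root of [-q_ab^2]: a first point supported on [{a, b}] has
   [v_a / v_b = ratio4 a b * 'i ^+ m] for one of four [m]. *)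
Definition ratio4 a b : C := sqrtC (sqrtC (- q a b ^+ 2)).

Lemma ratio4_pow4 a b : ratio4 a b ^+ 4 = - q a b ^+ 2.
Proof. by rewrite /ratio4 (exprM _ 2 2) !sqrtCK. Qed.

Lemma ratio4_neq0 a b : ratio4 a b != 0.
Proof.
apply/eqP => r0; move/eqP: (ratio4_pow4 a b).
by rewrite r0 expr0n eq_sym oppr_eq0 expf_eq0 (negbTE (q_neq0 a b)).
Qed.

Definition point2 a b (m : 'I_4) : 'I_4 -> C :=
  fun j => if j == a then ratio4 a b * 'i ^+ m else if j == b then 1 else 0.

Lemma supp_point2 {a b} m : a != b -> supp (point2 a b m) = [set a; b].
Proof.
move=> ab; apply/setP => j; rewrite in_supp !inE /point2.
have [->|_] := eqVneq j a; first by rewrite mulf_neq0 ?ratio4_neq0 ?expf_neq0 ?neq0Ci.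
by case: (eqVneq j b); rewrite ?oner_neq0 ?eqxx.
Qed.

Lemma point2_pm {a b} m : a != b -> point_module_seq q (diag_orbit (q a) (point2 a b m)).
Proof.
move=> ab; have ba : b != a by rewrite eq_sym.
apply: diag_orbit_pm => //.
- by exists b; rewrite /point2 (negbTE ba) eqxx oner_neq0.
- move=> x y; rewrite (supp_point2 m ab) !inE => /pred2P[]-> /pred2P[]->;
    by rewrite hqii ?mulr1 ?mul1r // mulrC hqij.
rewrite (big_ord_supp2 _ ab) => [|k ka kb]; last first.
  by rewrite /point2 (negbTE ka) (negbTE kb) expr0n mulr0.
rewrite /point2 eqxx (negbTE ba) eqxx hqii expr1n mul1r exprMn ratio4_pow4.
by rewrite -exprM mulnC exprM (prim_expr_order (prim4_rootCi C)) expr1n mulr1 expr1n mulr1 addNr.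
Qed.

Lemma point2_proj_inj {a b m m'} : a != b ->
  proj_eq (point2 a b m) (point2 a b m') -> m = m'.
Proof.
move=> ab [c [_ eq_c]]; have ba : b != a by rewrite eq_sym.
have := eq_c b; rewrite /point2 (negbTE ba) eqxx mulr1 => c1.
have := eq_c a; rewrite /point2 eqxx -c1 mul1r.
by move/(mulfI (ratio4_neq0 a b))/expCi_inj.
Qed.

Lemma proj_eq_point2 {v a b} : a != b -> supp v = [set a; b] ->
  \sum_(k < 4) q a k ^+ 2 * v k ^+ 4 = 0 -> exists m, proj_eq v (point2 a b m).
Proof.
move=> ab supp_v quartic.
have v0 k : k != a -> k != b -> v k = 0.
  by move=> ka kb; apply/eqP/negPn; rewrite -in_supp supp_v !inE negb_or ka kb.
have [va vb] : v a != 0 /\ v b != 0 by rewrite -!in_supp supp_v !inE !eqxx orbT.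
have {}quartic : v a ^+ 4 + q a b ^+ 2 * v b ^+ 4 = 0.
  rewrite -quartic (big_ord_supp2 _ ab) => [|k ka kb]; last by rewrite v0 // expr0n mulr0.
  by rewrite hqii expr1n mul1r.
have [m ratio_m] : exists m : 'I_4, v a / v b = ratio4 a b * 'i ^+ m.
  apply: eq_expr4 (ratio4_neq0 a b) _; rewrite ratio4_pow4 exprMn exprVn.
  apply: (mulIf (expf_neq0 4 vb)); rewrite divfK ?expf_neq0 //.
  by apply/eqP; rewrite -subr_eq0 mulNr opprK quartic.
exists m, (v b)^-1; split=> [|j]; first by rewrite invr_eq0.
rewrite /point2; case: (eqVneq j a) => [->|ja]; first by rewrite -ratio_m mulrC.
by case: (eqVneq j b) => [->|jb]; [rewrite mulVf | rewrite (v0 j) ?mulr0].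
Qed.

Definition two_point_pm (Bm : pair4 * 'I_4) : nat -> 'I_4 -> C :=
  diag_orbit (q (pair_fst Bm.1)) (point2 (pair_fst Bm.1) (pair_snd Bm.1) Bm.2).

Lemma two_point_pm_inj Bm Bm' : pm_iso (two_point_pm Bm) (two_point_pm Bm') -> Bm = Bm'.
Proof.
case: Bm Bm' => [B m] [B' m'] /(_ 0%N); rewrite /two_point_pm /= !diag_orbit0.
have [ab defB] := pair4P B; have [ab' defB'] := pair4P B'.
move=> iso; have BB' : B = B'.
  apply: val_inj; rewrite defB defB' -(supp_point2 m ab) -(supp_point2 m' ab').
  exact: supp_proj_eq iso.
by case: B' / BB' {ab' defB'} iso => /(point2_proj_inj ab) ->.
Qed.

Hypothesis q_ncob : ~~ coboundary.

Lemma pm_iso_two_point xi : point_module_seq q xi -> exists Bm, pm_iso xi (two_point_pm Bm).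
Proof.
move=> pm_xi; have S2 : #|supp (xi 0%N)| == 2%N.
  by rewrite eqn_leq pm_supp_le2 ?pm_supp_ge2.
pose B : pair4 := exist _ (supp (xi 0%N)) S2; have [ab defB] := pair4P B.
have xa : xi 0%N (pair_fst B) != 0 by rewrite -in_supp [supp _]defB !inE eqxx.
have [m iso0] := proj_eq_point2 ab defB (pm_first_quartic pm_xi xa).
exists (B, m); apply: (pm_iso_first pm_xi (point2_pm m ab)).
by rewrite diag_orbit0.
Qed.

End TwoPointCase.

End Hilb1.

Theorem proposition3p4 (C : numClosedFieldType) (q : 'I_4 -> 'I_4 -> C)
  (hq4 : forall i j, q i j ^+ 4 = 1)
  (hqii : forall i, q i i = 1)
  (hqij : forall i j, q i j * q j i = 1)
  (hprod : forall j j', \prod_(i < 4) q i j = \prod_(i < 4) q i j') :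
  hilb1_is_quartic_K3 q \/ hilb1_is_24_points q.
Proof.
have [/coboundaryP cob | not_cob] := boolP (coboundary q).
  by left; apply: hilb1_quartic_of_coboundary.
right; apply: (hilb1_24_points_of_family _ (two_point_pm q) card_pair4_ord).
- by case=> B m; apply: point2_pm (pair4P B).1.
- exact: two_point_pm_inj.
- exact: pm_iso_two_point.
Qed.
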